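(* Let $W=\mathfrak{S}_n$, $1\le c\le n-2$, and let $w_2\in\mathfrak{S}_n$ with $w_2^2=1$. Suppose $\ell(s_{c+1}s_cw_2s_c)=\ell(w_2)+3$, $s_cw_2\neq w_2s_c$, $s_{c+1}s_cw_2s_c=s_cw_2s_cs_{c+1}$ and $s_{c+1}w_2s_c<w_2s_c$. Then $s_{c+1}w_2<w_2$.
   Context: $s_j=(j,j+1)$; $\ell$ is the Coxeter length of $\mathfrak{S}_n$ and $<$ is the Bruhat order. *)

From HB Require Import structures.
From mathcomp Require Import all_boot all_order all_fingroup.
Set Implicit Arguments. Unset Strict Implicit. Unset Printing Implicit Defensive.
Local Open Scope group_scope.

(* Symmetric group S_n on {1,...,n}, realised as 'S_n = {perm 'I_n}
   (point k of {1..n} is the ordinal k-1). *)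

(* Simple transposition s_j = (j, j+1) for 1 <= j <= n-1; in 0-based
   ordinals it swaps j-1 and j.  (Out of range j gives the identity; such j
   are never used.) *)
Definition sref (n j : nat) : 'S_n :=
  match @insub _ (fun k => k < n) ('I_n) j.-1, @insub _ (fun k => k < n) ('I_n) j with
  | Some a, Some b => tperm a b
  | _, _ => 1
  end.

Definition has_word (n : nat) (w : 'S_n) (k : nat) : bool :=
  [exists t : k.-tuple 'I_n.-1, (\prod_(i <- t) sref n i.+1) == w].

(* Coxeter length: the least k such that w is a product of k simple
   transpositions.  The search range 0..n*n-1 contains the length
   (which is at most n(n-1)/2). *)
Definition coxlen (n : nat) (w : 'S_n) : nat :=
  find (has_word w) (iota 0 (n * n)).

Definition bruhat_step (n : nat) (u v : 'S_n) : bool :=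
  [exists a : 'I_n, exists b : 'I_n,
     [&& a != b, v == u * tperm a b & coxlen u < coxlen v]].

Definition bruhat_le (n : nat) (u v : 'S_n) : bool := connect (@bruhat_step n) u v.
Definition bruhat_lt (n : nat) (u v : 'S_n) : bool := (u != v) && bruhat_le u v.

From mathcomp Require Import all_boot all_order all_fingroup.
From mathcomp Require Import zify.
Set Implicit Arguments. Unset Strict Implicit. Unset Printing Implicit Defensive.
Local Open Scope group_scope.

(* The Coxeter length is the number of inversions.  Numbering points from 0 as
   in 'I_n, s_j exchanges j-1 and j and (s * u) x = u (s x); so s_{c+1} u < u
   in length exactly when u c > u (c+1).  For u = w2 s_c, whose values are
   those of w2 with c-1 and c exchanged, the hypothesis thus gives
   w2 c > w2 (c+1), except when w2 (c+1) = c and w2 c = c-1, which an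
   involution cannot do.  Then s_{c+1} w2 = w2 t with t = w2^-1 s_{c+1} w2 a
   reflection, one Bruhat step below w2. *)

Definition inversions n (w : 'S_n) : nat :=
  \sum_(p : 'I_n * 'I_n) ((p.1 < p.2) && (w p.2 < w p.1)).

Lemma inversions1 n : inversions (1 : 'S_n) = 0.
Proof. by rewrite /inversions big1 // => p _; rewrite !perm1; case: ltngtP. Qed.

Section AdjacentTransposition.

Variables (n : nat) (a b : 'I_n).
Hypothesis ab_adj : b = a.+1 :> nat.

Lemma ltn_tperm_adj (i j : 'I_n) :
  ~~ ((i == a) && (j == b)) -> ~~ ((i == b) && (j == a)) ->
  (tperm a b i < tperm a b j) = (i < j).
Proof.
have ord_eq (x y : 'I_n) : x = y -> x = y :> nat by move->.
have ord_neq (x y : 'I_n) : x <> y -> x <> y :> nat by move=> + /ord_inj.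
case: (tpermP a b i) => [/ord_eq ia | /ord_eq ia | /ord_neq ia /ord_neq ib];
case: (tpermP a b j) => [/ord_eq ja | /ord_eq ja | /ord_neq ja /ord_neq jb].
all: rewrite -!(inj_eq (@ord_inj n)) => h1 h2; lia.
Qed.

Lemma inversions_tperm_adj_mul (w : 'S_n) :
  inversions (tperm a b * w) + (w b < w a) = inversions w + (w a < w b).
Proof.
rewrite /inversions.
have swap_inj : injective (fun p : 'I_n * 'I_n => (tperm a b p.1, tperm a b p.2)).
  by move=> [x y] [x' y'] /= [/perm_inj -> /perm_inj ->].
rewrite (reindex_inj swap_inj) /=.
under eq_bigr => p _ do rewrite !permM !tpermK.
have ba_ab : (b, a) != (a, b).
  by rewrite xpair_eqE -!(inj_eq (@ord_inj n)) ab_adj; apply/nandP; left; lia.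
rewrite (bigD1 (a, b)) //= (bigD1 (b, a)) //= [in RHS](bigD1 (a, b)) //=.
rewrite [in RHS](bigD1 (b, a)) //= tpermL tpermR.
rewrite (eq_bigr (fun p : 'I_n * 'I_n => nat_of_bool ((p.1 < p.2) && (w p.2 < w p.1)))).
  by rewrite ab_adj ltnSn; case: ltngtP => /=; lia.
by move=> [i j] /andP[ij_ab ij_ba] /=; rewrite ltn_tperm_adj.
Qed.

Lemma inversions_tperm_adj_mul_le (w : 'S_n) :
  inversions (tperm a b * w) <= (inversions w).+1.
Proof. by have := inversions_tperm_adj_mul w; lia. Qed.

Lemma inversions_tperm_adj_mul_lt (w : 'S_n) :
  (inversions (tperm a b * w) < inversions w) = (w b < w a).
Proof.
have := inversions_tperm_adj_mul w; have : w a <> w b :> nat.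
  by move/ord_inj/perm_inj/(congr1 (@nat_of_ord n)); lia.
case: ltngtP => //=; lia.
Qed.

Lemma sref_adj : sref n b = tperm a b.
Proof.
rewrite /sref ab_adj /=; case: insubP => [a' _ a'E|]; last by rewrite ltn_ord.
case: insubP => [b' _ b'E|]; last by rewrite -ab_adj ltn_ord.
by congr tperm; apply: ord_inj; rewrite ?a'E ?b'E.
Qed.

End AdjacentTransposition.

Lemma sref_letter n (i : 'I_n.-1) :
  exists a b : 'I_n, b = a.+1 :> nat /\ sref n i.+1 = tperm a b.
Proof.
have ib : i.+1 < n by have := ltn_ord i; lia.
exists (Ordinal (ltnW ib)), (Ordinal ib); split => //.
exact: (@sref_adj _ (Ordinal (ltnW ib)) (Ordinal ib)).
Qed.

Lemma inversions_word_le n (t : seq 'I_n.-1) :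
  inversions (\prod_(i <- t) sref n i.+1) <= size t.
Proof.
elim: t => [|i t IH]; first by rewrite big_nil inversions1.
rewrite big_cons; have [a [b [ab_adj ->]]] := sref_letter i.
apply: leq_trans (inversions_tperm_adj_mul_le ab_adj _) _.
by rewrite ltnS.
Qed.

Lemma has_word_inversions_le n (w : 'S_n) k : has_word w k -> inversions w <= k.
Proof.
by case/existsP=> t /eqP <-; have := inversions_word_le t; rewrite size_tuple.
Qed.

Lemma perm_adj_ascents_eq1 n (w : 'S_n) :
  (forall a b : 'I_n, b = a.+1 :> nat -> w a < w b) -> w = 1.
Proof.
case: n w => [|n] w asc; first by apply/permP => -[].
pose ltn_ord_rel (i j : 'I_n.+1) := i < j.
have enum_sorted : sorted ltn_ord_rel (enum 'I_n.+1).
  by have := iota_ltn_sorted 0 n.+1; rewrite -val_enum_ord sorted_map.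
have nth_w_enum k : k < n.+1 ->
    nth ord0 (map w (enum 'I_n.+1)) k = w (nth ord0 (enum 'I_n.+1) k).
  by move=> k_lt; rewrite (nth_map ord0) ?size_enum_ord.
have w_enum_sorted : sorted ltn_ord_rel (map w (enum 'I_n.+1)).
  apply/(sortedP ord0) => i; rewrite size_map size_enum_ord => i_lt.
  rewrite /ltn_ord_rel !nth_w_enum ?(ltnW i_lt) //; apply: asc.
  by rewrite !nth_enum_ord ?(ltnW i_lt).
have w_enum : map w (enum 'I_n.+1) = enum 'I_n.+1.
  have lt_trans : transitive ltn_ord_rel by move=> j i k; exact: ltn_trans.
  have lt_irr : irreflexive ltn_ord_rel by move=> i; exact: ltnn.
  apply: (irr_sorted_eq lt_trans lt_irr) => // i.
  by rewrite mem_enum; apply/mapP; exists (w^-1 i); rewrite ?mem_enum ?permKV.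
apply/permP => i; have := congr1 (nth ord0 ^~ i) w_enum.
by rewrite /= nth_w_enum // !nth_ord_enum perm1.
Qed.

Lemma perm_eq1_or_adj_descent n (w : 'S_n) :
  w = 1 \/ exists a b : 'I_n, b = a.+1 :> nat /\ w b < w a.
Proof.
have [/existsP[a /existsP[b /andP[/eqP ab_adj desc]]]|no_desc] :=
  boolP [exists a : 'I_n, exists b : 'I_n, (b == a.+1 :> nat) && (w b < w a)].
  by right; exists a, b.
left; apply: perm_adj_ascents_eq1 => a b ab_adj.
have /existsPn/(_ b) := (existsPn no_desc) a; rewrite ab_adj eqxx /= -leqNgt.
have : w a <> w b :> nat by move/ord_inj/perm_inj/(congr1 (@nat_of_ord n)); lia.
lia.
Qed.

Lemma has_word_inversions n (w : 'S_n) : has_word w (inversions w).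
Proof.
move w_inv: (inversions w) => k; elim: k w w_inv => [|k IH] w w_inv;
  have [w1|[a [b [ab_adj desc]]]] := perm_eq1_or_adj_descent w.
- by apply/existsP; exists [tuple]; rewrite big_nil w1.
- by have := inversions_tperm_adj_mul ab_adj w; rewrite w_inv desc; lia.
- by rewrite w1 inversions1 in w_inv.
have /IH/existsP[t /eqP t_prod] : inversions (tperm a b * w) = k.
  by have := inversions_tperm_adj_mul ab_adj w; rewrite w_inv desc; lia.
have a_lt : a < n.-1 by have := ltn_ord b; lia.
apply/existsP; exists [tuple of Ordinal a_lt :: t].
by rewrite big_cons /= t_prod -ab_adj (sref_adj ab_adj) mulgA tperm2 mul1g.
Qed.

Lemma inversions_lt_square n (w : 'S_n) : 0 < n -> (inversions w < n * n)%N.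
Proof.
move=> n_gt0; pose i0 := Ordinal n_gt0.
rewrite /inversions (bigD1 (i0, i0)) //= add0n.
apply: (@leq_ltn_trans (\sum_(p | p != (i0, i0)) 1)).
  by apply: leq_sum => p _; case: (_ && _).
by rewrite sum1_card cardC1 card_prod card_ord prednK // muln_gt0 n_gt0.
Qed.

Lemma coxlenE n (w : 'S_n) : coxlen w = inversions w.
Proof.
case: n w => [|n] w; first by rewrite /inversions big1 // => -[[]].
have inv_lt := inversions_lt_square w (ltn0Sn n).
have has_inv : has (has_word w) (iota 0 (n.+1 * n.+1)).
  by apply/hasP; exists (inversions w); rewrite ?mem_iota ?has_word_inversions.
have find_lt := has_inv; rewrite has_find size_iota in find_lt.
rewrite /coxlen; apply/eqP; rewrite eqn_leq; apply/andP; split.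
  rewrite leqNgt; apply/negP => /(before_find 0).
  by rewrite nth_iota // has_word_inversions.
by have := nth_find 0 has_inv; rewrite nth_iota // => /has_word_inversions_le.
Qed.

Lemma coxlen_tperm_adj_mul_lt n (a b : 'I_n) (w : 'S_n) : b = a.+1 :> nat ->
  (coxlen (tperm a b * w) < coxlen w) = (w b < w a).
Proof. by move=> ab_adj; rewrite !coxlenE inversions_tperm_adj_mul_lt. Qed.

Lemma bruhat_lt_coxlen n (u v : 'S_n) : bruhat_lt u v -> coxlen u < coxlen v.
Proof.
case/andP=> u_neq_v /connectP[[|x p] u_path v_def]; subst v.
  by rewrite eqxx in u_neq_v.
have step_lt : subrel (@bruhat_step n) (relpre (@coxlen n) ltn).
  by move=> y z /existsP[? /existsP[? /and3P[]]].
have := sub_path step_lt u_path; rewrite -path_map => /(order_path_min ltn_trans).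
by move/allP; apply; apply: map_f; rewrite /= mem_last.
Qed.

Lemma bruhat_lt_tperm_mul n (a b : 'I_n) (w : 'S_n) :
  a != b -> coxlen (tperm a b * w) < coxlen w -> bruhat_lt (tperm a b * w) w.
Proof.
move=> a_neq_b shorter; apply/andP; split.
  by apply: contraTneq shorter => ->; rewrite ltnn.
have reflect_back : tperm a b * w * tperm (w a) (w b) = w.
  by rewrite -tpermJ conjgE !mulgA mulgK tperm2 mul1g.
apply: connect1; apply/existsP; exists (w a); apply/existsP; exists (w b).
by rewrite (inj_eq perm_inj) a_neq_b reflect_back eqxx shorter.
Qed.

Lemma involution_tperm_adj_descent n (p q r : 'I_n) (w : 'S_n) :
  q = p.+1 :> nat -> r = q.+1 :> nat -> w * w = 1 ->
  coxlen (tperm q r * (w * tperm p q)) < coxlen (w * tperm p q) ->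
  coxlen (tperm q r * w) < coxlen w.
Proof.
move=> pq qr w_inv; rewrite !coxlen_tperm_adj_mul_lt // !permM => desc.
have w_invol x : w (w x) = x by rewrite -permM w_inv perm1.
have [/andP[/eqP wr /eqP wq]|not_pq] := boolP ((w r == p) && (w q == q)).
  by move: desc; rewrite wr wq tpermL tpermR pq; lia.
rewrite -(ltn_tperm_adj pq not_pq) //; apply/negP => /andP[/eqP wr /eqP wq].
by have := w_invol r; rewrite wr wq => /(congr1 (@nat_of_ord n)); lia.
Qed.

Unset Implicit Arguments.

Theorem lemma2p18 (n c : nat) (w2 : 'S_n) :
  1 <= c -> c <= n - 2 ->
  w2 * w2 = 1 ->
  coxlen (sref n c.+1 * sref n c * w2 * sref n c) = (coxlen w2 + 3)%N ->
  sref n c * w2 != w2 * sref n c ->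
  sref n c.+1 * sref n c * w2 * sref n c = sref n c * w2 * sref n c * sref n c.+1 ->
  bruhat_lt (sref n c.+1 * w2 * sref n c) (w2 * sref n c) ->
  bruhat_lt (sref n c.+1 * w2) w2.
Proof.
move=> c_gt0 c_le w2_inv _ _ _ desc.
have p_lt : c.-1 < n by lia.
have q_lt : c < n by lia.
have r_lt : c.+1 < n by lia.
have pq : Ordinal q_lt = (Ordinal p_lt).+1 :> nat by rewrite /= prednK.
have qr : Ordinal r_lt = (Ordinal q_lt).+1 :> nat by [].
have s_c : sref n c = tperm (Ordinal p_lt) (Ordinal q_lt) by rewrite -(sref_adj pq).
have s_c1 : sref n c.+1 = tperm (Ordinal q_lt) (Ordinal r_lt) by rewrite -(sref_adj qr).
rewrite s_c s_c1 in desc *; apply: bruhat_lt_tperm_mul.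
  by apply/eqP => /(congr1 (@nat_of_ord n)) /=; lia.
apply: (involution_tperm_adj_descent pq qr w2_inv).
by apply: bruhat_lt_coxlen; rewrite mulgA.
Qed.
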